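(* Let $\beta\in\mathbb{C}$ and $k\in\mathbb{Z}$ with $\beta\neq k$, and define $f:\mathbb{Z}\times\mathbb{Z}\to\mathbb{C}$ by $f(m,n)=n+k$ if $m+n+k\neq0$ and $f(-n-k,n)=\frac{(n+k)(\beta-n-k)}{\beta-k}$ (the structure constants of the left-symmetric algebra $V^{\beta,k}$ on the Witt algebra with basis $\{x_n\}$, $x_mx_n=f(m,n)x_{m+n}$). Then there is no function $\omega:\mathbb{Z}\times\mathbb{Z}\to\mathbb{C}$ satisfying, for all $m,n,l\in\mathbb{Z}$, $$\omega(m,n)-\omega(n,m)=\tfrac{1}{12}(n^3-n)\delta_{m+n,0},\qquad (n-m)\omega(m+n,l)=\omega(m,n+l)f(n,l)-\omega(n,m+l)f(m,l).$$
   Context: These conditions on $\omega$ are exactly the conditions for the product $\theta\theta=x_m\theta=\theta x_m=0$, $x_mx_n=f(m,n)x_{m+n}+\omega(m,n)\theta$ on $V^{\beta,k}\oplus\mathbb{C}\theta$ to be a left-symmetric algebra (i.e. $(xy)z-x(yz)=(yx)z-y(xz)$) whose commutator is the Virasoro bracket $[x_m,x_n]=(n-m)x_{m+n}+\delta_{m+n,0}\frac{n^3-n}{12}\theta$, $[\theta,x_n]=0$. *)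

From mathcomp Require Import all_boot all_order all_algebra.
Set Implicit Arguments. Unset Strict Implicit. Unset Printing Implicit Defensive.
Import Order.TTheory GRing.Theory Num.Theory.
Local Open Scope ring_scope.

Definition Vf (C : numClosedFieldType) (beta : C) (k : int) (m n : int) : C :=
  if m + n + k != 0 then (n + k)%:~R
  else ((n + k)%:~R * (beta - (n + k)%:~R)) / (beta - k%:~R).

Definition kdelta (C : numClosedFieldType) (a b : int) : C :=
  if a == b then 1 else 0.

From mathcomp Require Import all_boot all_order all_algebra.
From mathcomp Require Import ring.
Import Order.TTheory GRing.Theory Num.Theory.
Local Open Scope ring_scope.

(* For k <> 0, the relation at (0, n, -n) forces k omega(n,-n) = (k - n) omega(0,0),
   so n |-> omega(n,-n) - omega(-n,n) is linear in n; the first relation makes it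
   (n - n^3)/12, which is impossible in characteristic 0 (compare n = 1 and n = 2).
   For k = 0 the relations at (1,-2,1) and (-1,2,-1), together with the first
   relation at n = 1 and n = 2, give 1/2 = 0. *)

Lemma Vf_generic (C : numClosedFieldType) (beta : C) (k m l : int) :
  m + l + k != 0 -> Vf beta k m l = (l + k)%:~R.
Proof. by rewrite /Vf => ->. Qed.

Lemma Vf0l (C : numClosedFieldType) (beta : C) (k l : int) :
  Vf beta k 0 l = (l + k)%:~R.
Proof. by rewrite /Vf add0r; case: (l + k =P 0) => [->|//]; rewrite !mul0r. Qed.

Section NoCocycle.

Variables (C : numClosedFieldType) (beta : C) (k : int) (w : int -> int -> C).

Hypothesis w_skew : forall m n : int,
  w m n - w n m = 12%:R^-1 * ((n%:~R) ^+ 3 - n%:~R) * kdelta C (m + n) 0.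

Hypothesis w_lsa : forall m n l : int,
  (n - m)%:~R * w (m + n) l
  = w m (n + l) * Vf beta k n l - w n (m + l) * Vf beta k m l.

Lemma w_skew_antidiag (n : int) :
  w n (- n) - w (- n) n = 12%:R^-1 * (n%:~R - n%:~R ^+ 3).
Proof. by rewrite w_skew /kdelta subrr eqxx mulr1 intrN; ring. Qed.

Lemma w_antidiag (n : int) : k != 0 ->
  k%:~R * w n (- n) = (k - n)%:~R * w 0 0.
Proof.
move=> k_neq0; have := w_lsa 0 n (- n).
rewrite add0r subrr subr0 Vf0l Vf_generic ?subrr ?add0r // => E.
apply/eqP; rewrite -subr_eq0; apply/eqP.
by rewrite -[RHS](subrr (n%:~R * w n (- n))) [X in _ = _ - X]E; ring.
Qed.

Lemma w_skew_antidiag_linear (n : int) : k != 0 ->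
  k%:~R * (12%:R^-1 * (n%:~R - n%:~R ^+ 3)) = - (2 * n)%:~R * w 0 0.
Proof.
move=> k_neq0.
rewrite -w_skew_antidiag mulrBr (w_antidiag n k_neq0).
by have := w_antidiag (- n) k_neq0; rewrite opprK => ->; ring.
Qed.

Lemma nonzero_k_absurd : k != 0 -> False.
Proof.
move=> k_neq0; have h1 := w_skew_antidiag_linear 1 k_neq0.
have h2 := w_skew_antidiag_linear 2 k_neq0.
have w00_eq0 : w 0 0 = 0.
  have : 2%:R * w 0 0 = 0.
    by transitivity (- (- (2 * 1)%:~R * w 0 0 : C)); [ring | rewrite -h1; ring].
  by move/eqP; rewrite mulf_eq0 pnatr_eq0 => /eqP.
have : k%:~R * (12%:R^-1 : C) * 6%:R = 0.
  by transitivity (- (k%:~R * (12%:R^-1 * (2%:~R - 2%:~R ^+ 3 : C))));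
    [ring | rewrite h2 w00_eq0; ring].
by move/eqP; rewrite !mulf_eq0 intr_eq0 (negPf k_neq0) invr_eq0 !pnatr_eq0.
Qed.

Lemma zero_k_absurd : k = 0 -> False.
Proof.
move=> k0.
have R1 : (-3)%:~R * w (-1) 1
          = w 1 (-1) * Vf beta k (-2) 1 - w (-2) 2 * Vf beta k 1 1.
  exact: w_lsa 1 (-2) 1.
have R2 : 3%:~R * w 1 (-1)
          = w (-1) 1 * Vf beta k 2 (-1) - w 2 (-2) * Vf beta k (-1) (-1).
  exact: w_lsa (-1) 2 (-1).
rewrite !Vf_generic k0 // !addr0 in R1 R2.
have : 6%:R * (12%:R^-1 : C) = 0.
  transitivity ((w 2 (-2) - w (-2) 2) - 2%:R * (w 1 (-1) - w (-1) 1)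
     + ((-3)%:~R * w (-1) 1 - (w 1 (-1) * 1%:~R - w (-2) 2 * 1%:~R))
     + (3%:~R * w 1 (-1) - (w (-1) 1 * (-1)%:~R - w 2 (-2) * (-1)%:~R))
     - 12%:R^-1 * (2%:~R - 2%:~R ^+ 3)); first ring.
  by rewrite (w_skew_antidiag 2) (w_skew_antidiag 1) R1 R2; ring.
by move/eqP; rewrite mulf_eq0 invr_eq0 !pnatr_eq0.
Qed.

End NoCocycle.

Theorem theorem4p2 (C : numClosedFieldType) (beta : C) (k : int)
  (hbk : beta != k%:~R) :
  ~ exists omega : int -> int -> C,
      (forall m n : int,
         omega m n - omega n m
         = 12%:R^-1 * ((n%:~R) ^+ 3 - n%:~R) * kdelta C (m + n) 0) /\
      (forall m n l : int,
         (n - m)%:~R * omega (m + n) l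
         = omega m (n + l) * Vf beta k n l - omega n (m + l) * Vf beta k m l).
Proof.
move=> [w [w_skew w_lsa]].
have [k0 | k_neq0] := eqVneq k 0.
- exact: zero_k_absurd w_lsa k0.
- exact: nonzero_k_absurd w_skew w_lsa k_neq0.
Qed.
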